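(* Let $X_1,\dots,X_n$ be (possibly dependent) random variables taking values in $\{0,1\}$, with $p_i=E(X_i)$, and let $S_n=\sum_{i=1}^n X_i$ and $\lambda=E(S_n)=\sum_{i=1}^n p_i$. Then $$D(P_{S_n}\,\|\,\mathrm{Po}(\lambda))\le \sum_{i=1}^n p_i^2+\Big[\sum_{i=1}^n H(X_i)-H(X_1,\dots,X_n)\Big].$$
   Context: $P_{S_n}$ is the distribution of $S_n$; $\mathrm{Po}(\lambda)$ is the Poisson distribution with mean $\lambda$. For distributions $P,Q$ on a countable set $S$, $D(P\|Q)=\sum_{x\in S}P(x)\log\frac{P(x)}{Q(x)}$ (natural logarithm, with conventions $0\log(0/a)=0$, $0\log(0/0)=0$, $a\log(a/0)=\infty$ for $a>0$). $H(X)=-\sum_x P(x)\log P(x)$ is the Shannon entropy of a discrete random variable or random vector, and $H(X_1,\dots,X_n)$ is the joint entropy. *)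

From HB Require Import structures.
From mathcomp Require Import all_boot all_order all_algebra.
From mathcomp Require Import reals constructive_ereal sequences exp.
Set Implicit Arguments. Unset Strict Implicit. Unset Printing Implicit Defensive.
Import Order.TTheory GRing.Theory Num.Theory.
Local Open Scope ring_scope.

Section Defs.
Variable R : realType.

(* Joint law of (X_1,...,X_n) : a probability mass function on {0,1}^n,
   an outcome being x : {ffun 'I_n -> bool} (x i = true means X_(i+1) = 1). *)
Definition is_pmf (T : finType) (P : T -> R) : Prop :=
  (forall x, 0 <= P x) /\ \sum_(x : T) P x = 1.

Definition marg (n : nat) (P : {ffun 'I_n -> bool} -> R) (i : 'I_n) (b : bool) : R :=
  \sum_(x : {ffun 'I_n -> bool} | x i == b) P x.

Definition pmean (n : nat) (P : {ffun 'I_n -> bool} -> R) (i : 'I_n) : R :=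
  marg P i true.

Definition Ssum (n : nat) (x : {ffun 'I_n -> bool}) : nat := \sum_(i < n) nat_of_bool (x i).

Definition lawS (n : nat) (P : {ffun 'I_n -> bool} -> R) (k : nat) : R :=
  \sum_(x : {ffun 'I_n -> bool} | Ssum x == k) P x.

Definition poisson (lam : R) (k : nat) : R := expR (- lam) * lam ^+ k / (k`!)%:R.

(* one term p log(p/q) of the relative entropy, with the conventions
   0 log(0/a) = 0 (a >= 0) and p log(p/0) = +oo for p > 0 *)
Definition klterm (p q : R) : \bar R :=
  if p == 0 then 0%E else if q == 0 then +oo%E else (p * ln (p / q))%:E.

(* D(P_{S_n} || Po(lam)) : summed over k = 0..n, the support of P_{S_n}
   (all other terms are 0 by the convention 0 log(0/a) = 0) *)
Definition KL_S_Poisson (n : nat) (P : {ffun 'I_n -> bool} -> R) (lam : R) : \bar R :=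
  \sum_(k < n.+1) klterm (lawS P k) (poisson lam k).

Definition entr (p : R) : R := if p == 0 then 0 else - (p * ln p).

Definition Hjoint (n : nat) (P : {ffun 'I_n -> bool} -> R) : R :=
  \sum_(x : {ffun 'I_n -> bool}) entr (P x).

Definition Hmarg (n : nat) (P : {ffun 'I_n -> bool} -> R) (i : 'I_n) : R :=
  \sum_(b : bool) entr (marg P i b).

End Defs.

From HB Require Import structures.
From mathcomp Require Import all_boot all_order all_algebra.
From mathcomp Require Import reals constructive_ereal sequences exp.
From mathcomp Require Import ring lra.
Import Order.TTheory GRing.Theory Num.Theory.
Set Implicit Arguments. Unset Strict Implicit. Unset Printing Implicit Defensive.
Local Open Scope ring_scope.

(* Compare P with the measure Q(x) = e^-lam prod_(i : x_i = 1) p_i on {0,1}^n.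
   The mass of Q on {S_n = k} is e^-lam e_k(p), and k! e_k(p) <= lam^k (e_k(p)
   is the k-th coefficient of prod_i (1 + p_i X)), so it is at most Po(lam)(k).
   The log-sum inequality on each fibre of S_n then gives
     D(P_{S_n} || Po(lam)) <= sum_x P(x) ln (P(x) / Q(x))
                            = lam - H(X_1, ..., X_n) - sum_i p_i ln p_i,
   and since H(X_i) = - p_i ln p_i - (1 - p_i) ln (1 - p_i), what is left is
   p + (1 - p) ln (1 - p) <= p^2, i.e. ln (1 - p) <= - p. *)

Section RealInequalities.
Variable R : realType.

Lemma ln_le_subr1 (y : R) : 0 < y -> ln y <= y - 1.
Proof.
move=> y_gt0; have := @le_ln1Dx R (y - 1); rewrite addrCA subrr addr0; apply; lra.
Qed.

Lemma exprDn_ge_first2 (x y : R) (k : nat) : 0 <= x -> 0 <= y ->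
  x ^+ k.+1 + k.+1%:R * y * x ^+ k <= (x + y) ^+ k.+1.
Proof.
move=> x_ge0 y_ge0; rewrite exprDn !big_ord_recl /= subn0 subSS subn0 expr0 mulr1.
rewrite bin0 bin1 expr1 addrA mulr1n [x ^+ k * y]mulrC -mulrA mulr_natl.
rewrite lerDl; apply: sumr_ge0 => i _; apply: mulrn_wge0.
by apply: mulr_ge0; apply: exprn_ge0.
Qed.

Lemma mul_ln_div_ge (a b t : R) : 0 <= a -> 0 <= b -> (0 < a -> 0 < b) -> 0 < t ->
  a * ln t + a - t * b <= a * ln (a / b).
Proof.
move=> a_ge0 b_ge0 ab t_gt0; have [->|a_neq0] := eqVneq a 0.
  by rewrite !mul0r add0r sub0r oppr_le0 mulr_ge0 // ltW.
have a_gt0 : 0 < a by rewrite lt_def a_neq0 a_ge0.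
have b_gt0 := ab a_gt0.
have bt_gt0 : 0 < b * t by apply: mulr_gt0.
have ln_le := ln_le_subr1 (divr_gt0 bt_gt0 a_gt0).
rewrite ln_div ?posrE // lnM ?posrE // in ln_le.
rewrite ln_div ?posrE //.
have := ler_wpM2l a_ge0 ln_le.
have -> : a * (b * t / a - 1) = t * b - a by field.
rewrite !mulrBr mulrDr; lra.
Qed.

Lemma sumr_gt0_support (I : finType) (A : pred I) (a b : I -> R) :
  (forall i, 0 <= a i) -> (forall i, 0 <= b i) -> (forall i, 0 < a i -> 0 < b i) ->
  0 < \sum_(i | A i) a i -> 0 < \sum_(i | A i) b i.
Proof.
move=> a_ge0 b_ge0 ab /gt_eqF/negbT/eqP /psumr_neq0P[// | i /andP[Ai ai_gt0]].
rewrite (bigD1 i) //=; apply: ltr_pwDl; first exact: ab.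
exact: sumr_ge0.
Qed.

Lemma log_sum_le (I : finType) (A : pred I) (a b : I -> R) (B : R) :
  (forall i, 0 <= a i) -> (forall i, 0 <= b i) -> (forall i, 0 < a i -> 0 < b i) ->
  0 < \sum_(i | A i) a i -> \sum_(i | A i) b i <= B ->
  (\sum_(i | A i) a i) * ln ((\sum_(i | A i) a i) / B) <=
  \sum_(i | A i) a i * ln (a i / b i).
Proof.
move=> a_ge0 b_ge0 ab; set sa := \sum_(i | A i) a i; set sb := \sum_(i | A i) b i.
move=> sa_gt0 sb_le.
have B_gt0 : 0 < B by apply: lt_le_trans sb_le; apply: sumr_gt0_support a_ge0 _ _ _.
have t_gt0 : 0 < sa / B by apply: divr_gt0.
apply: le_trans (ler_sum _ (fun i _ => mul_ln_div_ge (a_ge0 i) (b_ge0 i) (@ab i) t_gt0)).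
rewrite sumrB big_split /= -mulr_suml -mulr_sumr -/sa -/sb.
have : sa / B * sb <= sa / B * B by apply: ler_wpM2l => //; apply: ltW.
rewrite divfK ?gt_eqF //; lra.
Qed.

Lemma add_mulr_ln1B_le_sqr (p : R) : 0 <= p -> p <= 1 ->
  p + (1 - p) * ln (1 - p) <= p ^+ 2.
Proof.
move=> p_ge0 p_le1; have [p_eq1|p_neq1] := eqVneq p 1.
  by rewrite p_eq1 subrr mul0r addr0 expr1n.
have q_gt0 : 0 < 1 - p by rewrite subr_gt0 lt_def eq_sym p_neq1.
have := ler_wpM2l (ltW q_gt0) (ln_le_subr1 q_gt0).
rewrite expr2; nra.
Qed.

End RealInequalities.

Section ElementarySymmetric.
Variable R : realType.

Lemma fact_mul_coef_prod_le (n : nat) (p : 'I_n -> R) : (forall i, 0 <= p i) ->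
  forall k, k`!%:R * (\prod_(i < n) ((p i)%:P * 'X + 1))`_k <= (\sum_(i < n) p i) ^+ k.
Proof.
elim: n p => [|n IHn] p p_ge0 k.
  rewrite !big_ord0 coefC; case: k => [|k]; first by rewrite mulr1 expr0.
  by rewrite mulr0 expr0n.
rewrite !big_ord_recr /=.
set Q := \prod_(i < n) _; set mu := \sum_(i < n) _; set q := p ord_max.
have IHk := IHn (fun i => p (widen_ord (leqnSn n) i)) (fun i => p_ge0 _).
rewrite -/Q -/mu in IHk.
have mu_ge0 : 0 <= mu by apply: sumr_ge0 => i _.
have q_ge0 : 0 <= q by apply: p_ge0.
rewrite mulrDr mulr1 mulrA coefD coefMX coefMC.
case: k => [|k] /=; first by rewrite add0r.
have := exprDn_ge_first2 k mu_ge0 q_ge0.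
have : k.+1%:R * q * (k`!%:R * Q`_k) <= k.+1%:R * q * mu ^+ k.
  by apply: ler_wpM2l (IHk k); apply: mulr_ge0.
have := IHk k.+1; rewrite !factS !natrM; lra.
Qed.

Definition prod_sel (n : nat) (p : 'I_n -> R) (x : {ffun 'I_n -> bool}) : R :=
  \prod_(i < n | x i) p i.

Lemma prod_linear_polyE (n : nat) (p : 'I_n -> R) :
  \prod_(i < n) ((p i)%:P * 'X + 1) =
  \sum_(x : {ffun 'I_n -> bool}) (prod_sel p x)%:P * 'X^(Ssum x).
Proof.
have -> : \prod_(i < n) ((p i)%:P * 'X + 1) =
    \prod_(i < n) \sum_(b : bool) (if b then p i else 1)%:P * 'X^(nat_of_bool b).
  by apply: eq_bigr => i _; rewrite big_bool /= expr1 expr0 polyC1 mulr1.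
rewrite bigA_distr_bigA; apply: eq_bigr => x _.
rewrite big_split /= -prodrXr /prod_sel rmorph_prod [in RHS]big_mkcond /=.
by congr (_ * _); apply: eq_bigr => i _; case: (x i).
Qed.

Lemma fact_mul_esym_le (n : nat) (p : 'I_n -> R) (k : nat) : (forall i, 0 <= p i) ->
  k`!%:R * \sum_(x : {ffun 'I_n -> bool} | Ssum x == k) prod_sel p x
     <= (\sum_(i < n) p i) ^+ k.
Proof.
move=> p_ge0; suff -> : \sum_(x | Ssum x == k) prod_sel p x =
    (\prod_(i < n) ((p i)%:P * 'X + 1))`_k by exact: fact_mul_coef_prod_le.
rewrite prod_linear_polyE coef_sum big_mkcond; apply: eq_bigr => x _.
by rewrite coefCM coefXn eq_sym; case: eqP; rewrite ?mulr1 ?mulr0.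
Qed.

End ElementarySymmetric.

Lemma Ssum_le (n : nat) (x : {ffun 'I_n -> bool}) : (Ssum x <= n)%N.
Proof.
rewrite -[leqRHS]card_ord -sum1_card; apply: leq_sum => i _.
by case: (x i).
Qed.

Lemma sum_by_Ssum (V : nmodType) (n : nat) (F : {ffun 'I_n -> bool} -> V) :
  \sum_(k < n.+1) \sum_(x | Ssum x == k) F x = \sum_x F x.
Proof.
rewrite [RHS](partition_big (fun x => inord (Ssum x) : 'I_n.+1) predT) //.
apply: eq_bigr => k _; apply: eq_bigl => x /=.
have Ssum_lt : (Ssum x < n.+1)%N by rewrite ltnS Ssum_le.
apply/eqP/eqP => [Sx | <-]; last by rewrite inordK.
by apply: val_inj; rewrite /= inordK Sx.
Qed.

Lemma entrE (R : realType) (y : R) : entr y = - (y * ln y).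
Proof. by rewrite /entr; case: eqP => [->|_]; rewrite ?mul0r ?oppr0. Qed.

Section JointLaw.
Variables (R : realType) (n : nat) (P : {ffun 'I_n -> bool} -> R).
Hypotheses (P_ge0 : forall x, 0 <= P x) (P_sum1 : \sum_x P x = 1).

Local Notation p := (pmean P).
Let lam := \sum_(i < n) p i.

Lemma pmeanE (i : 'I_n) : p i = \sum_(x : {ffun 'I_n -> bool} | x i) P x.
Proof. by apply: eq_bigl => x; rewrite eqb_id. Qed.

Lemma pmean_ge0 (i : 'I_n) : 0 <= p i.
Proof. exact: sumr_ge0. Qed.

Lemma le_pmean (x : {ffun 'I_n -> bool}) (i : 'I_n) : x i -> P x <= p i.
Proof. by move=> xi; rewrite pmeanE (bigD1 x) //= lerDl sumr_ge0. Qed.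

Lemma marg_falseE (i : 'I_n) : marg P i false = 1 - p i.
Proof.
rewrite -P_sum1 (bigID (fun x : {ffun 'I_n -> bool} => x i)) /= -pmeanE.
rewrite addrAC subrr add0r.
by apply: eq_bigl => x; rewrite eqbF_neg.
Qed.

Lemma pmean_le1 (i : 'I_n) : p i <= 1.
Proof. by rewrite -subr_ge0 -marg_falseE sumr_ge0. Qed.

Lemma HmargE (i : 'I_n) :
  Hmarg P i = - (p i * ln (p i)) - (1 - p i) * ln (1 - p i).
Proof. by rewrite /Hmarg big_bool /= marg_falseE !entrE addrC. Qed.

Let q (x : {ffun 'I_n -> bool}) := expR (- lam) * prod_sel p x.

Lemma q_ge0 (x : {ffun 'I_n -> bool}) : 0 <= q x.
Proof. by rewrite mulr_ge0 ?expR_ge0 // prodr_ge0 // => i _; apply: pmean_ge0. Qed.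

Lemma q_gt0 (x : {ffun 'I_n -> bool}) : 0 < P x -> 0 < q x.
Proof.
move=> Px_gt0; rewrite mulr_gt0 ?expR_gt0 // prodr_gt0 // => i xi.
exact: lt_le_trans Px_gt0 (le_pmean xi).
Qed.

Lemma ln_q (x : {ffun 'I_n -> bool}) : 0 < P x ->
  ln (q x) = - lam + \sum_(i < n | x i) ln (p i).
Proof.
move=> Px_gt0; rewrite /q /prod_sel.
have -> : \prod_(i < n | x i) p i = expR (\sum_(i < n | x i) ln (p i)).
  rewrite expR_sum; apply: eq_bigr => i xi; rewrite lnK // posrE.
  exact: lt_le_trans Px_gt0 (le_pmean xi).
by rewrite -expRD expRK.
Qed.

Lemma sum_q_le_poisson (k : nat) : \sum_(x | Ssum x == k) q x <= poisson lam k.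
Proof.
rewrite -mulr_sumr /poisson -mulrA ler_wpM2l ?expR_ge0 //.
rewrite ler_pdivlMr ?ltr0n ?fact_gt0 // mulrC.
exact: fact_mul_esym_le pmean_ge0.
Qed.

Lemma klterm_lawS_le (k : nat) : (klterm (lawS P k) (poisson lam k) <=
  (\sum_(x | Ssum x == k) P x * ln (P x / q x))%:E)%E.
Proof.
rewrite /klterm; have [Sk_eq0|Sk_neq0] := eqVneq (lawS P k) 0.
  rewrite lee_fin big1 // => x Sx.
  by rewrite (psumr_eq0P (fun y _ => P_ge0 y) Sk_eq0) // mul0r.
have Sk_gt0 : 0 < lawS P k by rewrite lt_def Sk_neq0 sumr_ge0.
have po_gt0 : 0 < poisson lam k.
  apply: lt_le_trans (sum_q_le_poisson k).
  exact: sumr_gt0_support P_ge0 q_ge0 q_gt0 Sk_gt0.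
rewrite gt_eqF // lee_fin.
exact: log_sum_le P_ge0 q_ge0 q_gt0 Sk_gt0 (sum_q_le_poisson k).
Qed.

Lemma cross_entropyE : \sum_x P x * ln (P x / q x) =
  lam - Hjoint P - \sum_(i < n) p i * ln (p i).
Proof.
have termE x : P x * ln (P x / q x) =
    P x * ln (P x) + lam * P x - \sum_(i < n | x i) P x * ln (p i).
  have [Px_eq0|Px_neq0] := eqVneq (P x) 0.
    by rewrite Px_eq0 big1 => [|i _]; rewrite ?mul0r ?mulr0 ?subr0 ?addr0.
  have Px_gt0 : 0 < P x by rewrite lt_def Px_neq0 P_ge0.
  rewrite ln_div ?posrE ?q_gt0 // ln_q // -mulr_sumr; ring.
rewrite (eq_bigr _ (fun x _ => termE x)) sumrB big_split /= -mulr_sumr P_sum1 mulr1.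
have -> : \sum_x P x * ln (P x) = - Hjoint P.
  by rewrite /Hjoint -sumrN; apply: eq_bigr => x _; rewrite entrE opprK.
rewrite (exchange_big_dep predT) //= [- _ + _]addrC.
congr (_ - _ - _); apply: eq_bigr => i _.
by rewrite -mulr_suml -pmeanE.
Qed.

Lemma KL_S_Poisson_le :
  (KL_S_Poisson P lam <= (lam - Hjoint P - \sum_(i < n) p i * ln (p i))%:E)%E.
Proof.
rewrite -cross_entropyE -sum_by_Ssum -sumEFin.
by apply: lee_sum => k _; apply: klterm_lawS_le.
Qed.

End JointLaw.

Theorem proposition1 (R : realType) (n : nat) (P : {ffun 'I_n -> bool} -> R) :
  is_pmf P ->
  let lam := \sum_(i < n) pmean P i in
  (KL_S_Poisson P lam <=
     ((\sum_(i < n) pmean P i ^+ 2) + ((\sum_(i < n) Hmarg P i) - Hjoint P))%:E)%E.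
Proof.
move=> [P_ge0 P_sum1] /=; apply: le_trans (KL_S_Poisson_le P_ge0 P_sum1) _.
rewrite lee_fin (eq_bigr _ (fun i _ => HmargE P_sum1 i)) sumrB sumrN.
have : \sum_(i < n) (pmean P i + (1 - pmean P i) * ln (1 - pmean P i))
    <= \sum_(i < n) pmean P i ^+ 2.
  apply: ler_sum => i _.
  exact: add_mulr_ln1B_le_sqr (pmean_ge0 P_ge0 i) (pmean_le1 P_ge0 P_sum1 i).
rewrite big_split /=; lra.
Qed.
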